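(* Every countable ordinal $\alpha$ is $\mathrm{VD}_*$-sum-indecomposable: if $\mathfrak A$ is a countable scattered linear ordering with $\mathrm{VD}_*(\mathfrak A)=\alpha$ and $\mathfrak A$ is a sum augmentation of linear orderings $\mathfrak B_1,\dots,\mathfrak B_n$, then some $\mathfrak B_i$ is scattered with $\mathrm{VD}_*(\mathfrak B_i)=\alpha$.
   Context: All linear orderings are countable. A linear ordering is scattered if $(\mathbb Q;<)$ does not embed into it. For a linear ordering $\mathfrak I$ and orderings $(\mathfrak A_i)_{i\in I}$, the $\mathfrak I$-sum $\sum_{i\in\mathfrak I}\mathfrak A_i$ is the disjoint union ordered lexicographically (first by index in $\mathfrak I$, then within $\mathfrak A_i$). The classes $\mathcal{VD}_\alpha$ ($\alpha$ countable ordinal): $\mathcal{VD}_0=\{\mathbf 0,\mathbf 1\}$ (empty and one-point orderings); for $\alpha>0$, $\mathcal{VD}_\alpha$ consists of all finite sums, $\omega$-sums, $\omega^*$-sums and $\zeta$-sums (indexed by $(\mathbb N;\le)$, $(\mathbb N;\ge)$, $(\mathbb Z;\le)$) of elements of $\mathcal{VD}_{<\alpha}=\bigcup_{\beta<\alpha}\mathcal{VD}_\beta$. Every countable scattered ordering lies in some $\mathcal{VD}_\alpha$. $\mathrm{VD}_*(\mathfrak A)$ for scattered $\mathfrak A$ is the least $\alpha$ such that $\mathfrak A$ is a finite sum of elements of $\mathcal{VD}_\alpha$. $\mathfrak A$ is a sum augmentation of $\mathfrak B_1,\dots,\mathfrak B_n$ if $A=A_1\uplus\dots\uplus A_n$ with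 $\mathfrak A\restriction A_i\cong\mathfrak B_i$. *)

From Stdlib Require Import QArith ZArith Arith.

Record LO := mkLO {
  car :> Type;
  rel : car -> car -> Prop;
  rel_irrefl : forall x, ~ rel x x;
  rel_trans : forall x y z, rel x y -> rel y z -> rel x z;
  rel_total : forall x y, x <> y -> rel x y \/ rel y x;
  car_countable : exists f : car -> nat, forall x y, f x = f y -> x = y
}.

Definition bijective {X Y : Type} (f : X -> Y) : Prop :=
  (forall x y, f x = f y -> x = y) /\ (forall y, exists x, f x = y).

Definition Iso (X : Type) (rX : X -> X -> Prop) (Y : Type) (rY : Y -> Y -> Prop) : Prop :=
  exists f : X -> Y, bijective f /\ forall x y, rX x y <-> rY (f x) (f y).

Definition scattered (A : LO) : Prop :=
  ~ exists f : Q -> car A, forall p q, (p < q)%Q -> rel A (f p) (f q).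

Definition lexlt {I : Type} (ltI : I -> I -> Prop) (F : I -> LO)
  (x y : {i : I & car (F i)}) : Prop :=
  ltI (projT1 x) (projT1 y) \/
  exists e : projT1 x = projT1 y,
    rel (F (projT1 y)) (eq_rect _ (fun i => car (F i)) (projT2 x) _ e) (projT2 y).

Definition IsSum (I : Type) (ltI : I -> I -> Prop) (F : I -> LO) (A : LO) : Prop :=
  Iso {i : I & car (F i)} (lexlt ltI F) (car A) (rel A).

Definition fin_idx (n : nat) := {k : nat | (k < n)%nat}.
Definition fin_lt {n : nat} (i j : fin_idx n) : Prop := (proj1_sig i < proj1_sig j)%nat.

(** * Countable ordinals as Brouwer trees *)
Inductive ord : Type :=
| OZ : ord
| OS : ord -> ord
| OL : (nat -> ord) -> ord.  (* supremum of a sequence *)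

Inductive ole : ord -> ord -> Prop :=
| ole_zero : forall y, ole OZ y
| ole_trans : forall x y z, ole x y -> ole y z -> ole x z
| ole_succ : forall x y, ole x y -> ole (OS x) (OS y)
| ole_cocone : forall x f k, ole x (f k) -> ole x (OL f)
| ole_limiting : forall f x, (forall k, ole (f k) x) -> ole (OL f) x.

Definition olt (x y : ord) : Prop := ole (OS x) y.

(* VD_alpha = {0,1} together with all finite/omega/omega*/zeta sums of
   elements of VD_{<alpha}; this agrees with the paper's definition
   (for alpha > 0, {0,1} = VD_0 is contained in the 1-term finite sums). *)
Inductive VD : ord -> LO -> Prop :=
| VD_zero : forall a (A : LO), (car A -> False) -> VD a A
| VD_one : forall a (A : LO), (exists x : car A, forall y, y = x) -> VD a A
| VD_fin : forall a (A : LO) n (F : fin_idx n -> LO),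
    (forall i, exists b, olt b a /\ VD b (F i)) ->
    IsSum (fin_idx n) fin_lt F A -> VD a A
| VD_omega : forall a (A : LO) (F : nat -> LO),
    (forall i, exists b, olt b a /\ VD b (F i)) ->
    IsSum nat Peano.lt F A -> VD a A
| VD_omegastar : forall a (A : LO) (F : nat -> LO),
    (forall i, exists b, olt b a /\ VD b (F i)) ->
    IsSum nat (fun i j => (j < i)%nat) F A -> VD a A
| VD_zeta : forall a (A : LO) (F : Z -> LO),
    (forall i, exists b, olt b a /\ VD b (F i)) ->
    IsSum Z Z.lt F A -> VD a A.

Definition FinSumOf (P : LO -> Prop) (A : LO) : Prop :=
  exists n (F : fin_idx n -> LO), (forall i, P (F i)) /\ IsSum (fin_idx n) fin_lt F A.

Definition VDstar_is (A : LO) (a : ord) : Prop :=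
  FinSumOf (VD a) A /\ forall b, olt b a -> ~ FinSumOf (VD b) A.

Definition sum_augmentation (A : LO) (n : nat) (B : fin_idx n -> LO) : Prop :=
  exists part : car A -> fin_idx n,
    forall i, Iso {x : car A | part x = i}
                  (fun x y => rel A (proj1_sig x) (proj1_sig y))
                  (car (B i)) (rel (B i)).

(** We work with subsets [S] of a fixed countable linear order
    [(T, lt)] instead of abstract orderings: [VDset lt a S] says that [S] is,
    as a suborder, in the class VD_a, where every infinite sum is presented
    as a [Z]-indexed sum of consecutive (possibly empty) blocks, and
    [FinVDset lt a S] says that [S] is a finite sum of such sets.  These
    notions are hereditary (closed under subsets), monotone in the rank and
    invariant under reversing the order.

    The heart of the argument is a local characterisation: [S] is VD_a iff
    every closed interval of [S] with distinct end points is a finite sum of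
    sets of rank below [a] (lemmas [VDset_interval] and [VDset_of_intervals]).
    With it we prove, by well-founded induction on the rank, that a union of
    two [FinVDset a] sets is again [FinVDset a] ([FinVDset_union]): a
    monotone counting labelling cuts the union into finitely many pieces,
    each of whose small intervals lies in a lower rank.

    If every part [B_i] of a sum
    augmentation of [A] had VD_*-rank below [a], the parts would share a
    common rank [c < a] and their union [A] would be a finite sum of VD_c
    orderings, contradicting [VDstar_is A a]. *)

From Stdlib Require Import QArith ZArith Arith Lia Classical ClassicalEpsilon ProofIrrelevance.
Open Scope nat_scope.

(** ** Countable ordinals *)

(** A structurally recursive reformulation of [ole]: it recurses on [x] and,
    below a successor [OS x'], on [y].  It coincides with [ole]
    ([ole_s_sound], [ole_s_complete]) and makes the order laws provable by
    plain induction. *)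
Fixpoint ole_s (x y : ord) {struct x} : Prop :=
  match x with
  | OZ => True
  | OS x' =>
      (fix lt_s (y : ord) : Prop :=
         match y with
         | OZ => False
         | OS y' => ole_s x' y'
         | OL g => exists k, lt_s (g k)
         end) y
  | OL f => forall k, ole_s (f k) y
  end.

Lemma ole_s_cocone : forall x g k, ole_s x (g k) -> ole_s x (OL g).
Proof.
  induction x as [|x IH|f IH]; intros g k H; simpl in *; auto.
  - exists k; exact H.
  - intros j; eapply IH; eauto.
Qed.

Lemma ole_s_refl : forall x, ole_s x x.
Proof.
  induction x as [|x IH|f IH]; simpl; auto.
  intros k; eapply ole_s_cocone; apply IH.
Qed.

Lemma ole_s_trans : forall x y z, ole_s x y -> ole_s y z -> ole_s x z.
Proof.
  induction x as [|x IHx|f IHf]; intros y z H1 H2.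
  - exact I.
  - revert z H1 H2. induction y as [|y IHy|g IHg]; intros z H1 H2.
    + destruct H1.
    + revert H2. induction z as [|z IHz|h IHh]; intros H2.
      * destruct H2.
      * simpl in *. eapply IHx; eauto.
      * destruct H2 as [k Hk]. exists k. apply IHh. exact Hk.
    + destruct H1 as [k Hk]. eapply IHg. exact Hk. apply H2.
  - simpl in *. intros k. eapply IHf; eauto.
Qed.

Lemma ole_s_sound : forall x y, ole x y -> ole_s x y.
Proof.
  intros x y H; induction H; simpl; eauto using ole_s_trans, ole_s_cocone.
Qed.

Lemma ole_s_complete : forall x y, ole_s x y -> ole x y.
Proof.
  induction x as [|x IHx|f IHf]; intros y H.
  - constructor.
  - induction y as [|y IHy|g IHg].
    + destruct H.
    + constructor. apply IHx. exact H.
    + destruct H as [k Hk]. eapply ole_cocone. apply IHg. exact Hk.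
  - constructor. intros k. apply IHf. apply H.
Qed.

Lemma ole_refl : forall x, ole x x.
Proof. intros; apply ole_s_complete, ole_s_refl. Qed.

Lemma ole_succ_inv : forall a b, ole (OS a) (OS b) -> ole a b.
Proof. intros a b H. apply ole_s_complete, (ole_s_sound _ _ H). Qed.

Lemma olt_irrefl : forall x, ~ olt x x.
Proof.
  unfold olt; intros x H; apply ole_s_sound in H; revert H.
  induction x as [|x IH|f IH]; intros H.
  - exact H.
  - apply IH. exact H.
  - destruct H as [k Hk]. apply (IH k).
    assert (Hfk : ole_s (OS (f k)) (OS (OL f))) by (eapply ole_s_cocone, ole_s_refl).
    eapply ole_s_trans; eauto.
Qed.

Lemma ole_succ : forall x, ole x (OS x).
Proof.
  induction x as [|x IH|f IH].
  - constructor.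
  - constructor. exact IH.
  - constructor. intros k. eapply ole_trans. apply IH.
    constructor. eapply ole_cocone. apply ole_refl.
Qed.

Lemma olt_ole : forall x y, olt x y -> ole x y.
Proof. unfold olt; intros; eapply ole_trans. apply ole_succ. eassumption. Qed.

Lemma olt_ole_trans : forall x y z, olt x y -> ole y z -> olt x z.
Proof. unfold olt; intros; eapply ole_trans; eauto. Qed.

Lemma ole_total : forall x y, ole x y \/ olt y x.
Proof.
  induction x as [|x IHx|f IHf]; intros y.
  - left; constructor.
  - induction y as [|y IHy|g IHg].
    + right. constructor. constructor.
    + destruct (IHx y) as [H|H].
      * left. constructor. exact H.
      * right. constructor. exact H.
    + destruct (classic (exists k, ole (OS x) (g k))) as [[k Hk]|Hn].
      * left. eapply ole_cocone; eauto.
      * right. constructor. constructor. intros k.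
        destruct (IHg k) as [H|H]; [exfalso; eauto|].
        apply ole_succ_inv. exact H.
  - destruct (classic (forall k, ole (f k) y)) as [H|H].
    + left. constructor. exact H.
    + apply not_all_ex_not in H. destruct H as [k Hk].
      destruct (IHf k y) as [H|H]; [contradiction|].
      right. eapply ole_cocone. exact H.
Qed.

Lemma olt_wf : well_founded olt.
Proof.
  assert (down : forall x y, Acc olt y -> ole x y -> Acc olt x).
  { intros x y Ha Hxy. constructor. intros z Hz. apply (Acc_inv Ha).
    eapply olt_ole_trans; eauto. }
  intros x; induction x as [|x IH|f IH].
  - constructor. intros z Hz. apply ole_s_sound in Hz. destruct Hz.
  - constructor. intros z Hz. eapply down. exact IH. apply ole_succ_inv. exact Hz.
  - constructor. intros z Hz.
    destruct (classic (exists k, ole (OS z) (f k))) as [[k Hk]|Hn].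
    + apply (Acc_inv (IH k)). exact Hk.
    + exfalso. apply (olt_irrefl z). eapply olt_ole_trans. exact Hz.
      constructor. intros k. destruct (ole_total (OS z) (f k)) as [H|H].
      * exfalso; eauto.
      * apply ole_succ_inv. exact H.
Qed.

Lemma olt_bound2 : forall a b1 b2, olt b1 a -> olt b2 a ->
  exists c, olt c a /\ ole b1 c /\ ole b2 c.
Proof.
  intros a b1 b2 H1 H2. destruct (ole_total b1 b2) as [H|H].
  - exists b2; repeat split; auto using ole_refl.
  - exists b1; repeat split; auto using ole_refl, olt_ole.
Qed.

Lemma olt_bound_upto : forall a (g : nat -> ord) N, (forall i, i <= N -> olt (g i) a) ->
  exists c, olt c a /\ forall i, i <= N -> ole (g i) c.
Proof.
  intros a g N; induction N as [|N IH]; intros H.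
  - exists (g 0). split; [apply H; lia|].
    intros i Hi. replace i with 0 by lia. apply ole_refl.
  - destruct IH as [c [Hc1 Hc2]]; [intros; apply H; lia|].
    destruct (olt_bound2 a c (g (S N))) as [d [Hd1 [Hd2 Hd3]]]; auto.
    exists d; split; auto. intros i Hi. destruct (Nat.eq_dec i (S N)) as [->|Hne]; auto.
    eapply ole_trans; [apply Hc2; lia|auto].
Qed.

Lemma olt_bound_fin : forall a n (g : fin_idx n -> ord), 1 <= n ->
  (forall i, olt (g i) a) -> exists c, olt c a /\ forall i, ole (g i) c.
Proof.
  intros a n g Hn Hg.
  set (G := fun j => match lt_dec j n with left p => g (exist _ j p) | right _ => g (exist _ 0 Hn) end).
  destruct (olt_bound_upto a G (n - 1)) as [c [Hc HGc]].
  { intros j _. unfold G. destruct (lt_dec j n); apply Hg. }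
  exists c; split; auto. intros [j p]. specialize (HGc j ltac:(lia)). unfold G in HGc.
  destruct (lt_dec j n) as [q|q]; [|lia].
  replace p with q by apply proof_irrelevance. exact HGc.
Qed.

(** ** The VD hierarchy on subsets of a fixed order *)

(** A sum of
    lower-rank blocks is given by a block map [blk : T -> Z] that is monotone
    on [S]; blocks may be empty, so the single [Z]-indexed constructor covers
    finite, [omega], [omega*] and [zeta] sums at once. *)
Inductive VDset {T : Type} (lt : T -> T -> Prop) : ord -> (T -> Prop) -> Prop :=
| VDset_empty : forall a S, (forall x, ~ S x) -> VDset lt a S
| VDset_single : forall a S x, S x -> (forall y, S y -> y = x) -> VDset lt a S
| VDset_sum : forall a S (blk : T -> Z) (b : Z -> ord),
    (forall x y, S x -> S y -> lt x y -> (blk x <= blk y)%Z) ->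
    (forall z, olt (b z) a) ->
    (forall z, VDset lt (b z) (fun x => S x /\ blk x = z)) -> VDset lt a S.

Definition FinVDset {T : Type} (lt : T -> T -> Prop) (a : ord) (S : T -> Prop) : Prop :=
  exists n (c : T -> nat), (forall x, S x -> c x < n) /\
    (forall x y, S x -> S y -> lt x y -> c x <= c y) /\
    forall k, VDset lt a (fun x => S x /\ c x = k).

Definition rle {T : Type} (lt : T -> T -> Prop) (x y : T) : Prop := lt x y \/ x = y.

Definition itv {T : Type} (lt : T -> T -> Prop) (S : T -> Prop) (x y : T) : T -> Prop :=
  fun u => S u /\ rle lt x u /\ rle lt u y.

(** On countable linear
    orders this is equivalent to [VDset lt beta K] ([VDset_interval],
    [VDset_of_intervals]). *)
Definition small_intervals {T : Type} (lt : T -> T -> Prop) (beta : ord) (K : T -> Prop) : Prop :=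
  forall x y, K x -> K y -> rle lt x y ->
    x = y \/ exists g, olt g beta /\ FinVDset lt g (itv lt K x y).

Section Closure.
Context {T : Type} (lt : T -> T -> Prop).

Lemma VDset_ext : forall a S, VDset lt a S -> forall S', (forall x, S x <-> S' x) -> VDset lt a S'.
Proof.
  intros a S H; induction H as [a S H|a S x H Hu|a S blk b Hm Hb Hv IH]; intros S' E.
  - apply VDset_empty. intros x Hx. apply (H x), E, Hx.
  - apply (VDset_single _ _ _ x); [apply E; auto|]. intros y Hy. apply Hu, E, Hy.
  - apply (VDset_sum _ _ _ blk b); [intros x y Hx Hy; apply Hm; apply E; auto|exact Hb|].
    intros z. apply IH. intros x. rewrite E. tauto.
Qed.

Lemma VDset_subsingleton : forall a S, (forall x y, S x -> S y -> x = y) -> VDset lt a S.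
Proof.
  intros a S H. destruct (classic (exists x, S x)) as [[x Hx]|Hn].
  - apply (VDset_single _ _ _ x Hx). intros y Hy; apply H; auto.
  - apply VDset_empty. intros x Hx; apply Hn; eauto.
Qed.

Lemma VDset_sub : forall a S, VDset lt a S -> forall S', (forall x, S' x -> S x) -> VDset lt a S'.
Proof.
  intros a S H; induction H as [a S H|a S x H Hu|a S blk b Hm Hb Hv IH]; intros S' E.
  - apply VDset_empty. intros x Hx. apply (H x). auto.
  - apply VDset_subsingleton. intros u v Hu' Hv'. rewrite (Hu u), (Hu v); auto.
  - apply (VDset_sum _ _ _ blk b); [intros x y Hx Hy; apply Hm; auto|exact Hb|].
    intros z. apply IH. intros x [Hx Hz]. auto.
Qed.

Lemma VDset_level : forall a S, VDset lt a S -> forall a', ole a a' -> VDset lt a' S.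
Proof.
  intros a S H; induction H as [a S H|a S x H Hu|a S blk b Hm Hb Hv IH]; intros a' Ha.
  - apply VDset_empty; auto.
  - eapply VDset_single; eauto.
  - apply (VDset_sum _ _ _ blk b); auto. intros z; eapply olt_ole_trans; eauto.
Qed.

Definition Zblocks (beta : ord) (S : T -> Prop) (L : T -> Z) : Prop :=
  (forall x y, S x -> S y -> lt x y -> (L x <= L y)%Z) /\
  forall z, exists b, olt b beta /\ VDset lt b (fun x => S x /\ L x = z).

Lemma VDset_of_Zblocks : forall beta S L, Zblocks beta S L -> VDset lt beta S.
Proof.
  intros beta S L [Hm H]. apply choice in H. destruct H as [b Hb].
  apply (VDset_sum _ _ _ L b); auto; intros z; apply Hb.
Qed.

Lemma FinVDset_ext : forall a S, FinVDset lt a S -> forall S', (forall x, S x <-> S' x) -> FinVDset lt a S'.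
Proof.
  intros a S [n [c [H1 [H2 H3]]]] S' E. exists n, c. repeat split.
  - intros x Hx; apply H1, E, Hx.
  - intros x y Hx Hy; apply H2; apply E; auto.
  - intros k. eapply VDset_ext; [apply (H3 k)|]. intros x. cbv beta. rewrite E. tauto.
Qed.

Lemma FinVDset_sub : forall a S, FinVDset lt a S -> forall S', (forall x, S' x -> S x) -> FinVDset lt a S'.
Proof.
  intros a S [n [c [H1 [H2 H3]]]] S' E. exists n, c. repeat split.
  - intros x Hx; apply H1, E, Hx.
  - intros x y Hx Hy; apply H2; apply E; auto.
  - intros k. eapply VDset_sub; [apply (H3 k)|]. intros x [Hx Hk]. auto.
Qed.

Lemma FinVDset_level : forall a S, FinVDset lt a S -> forall a', ole a a' -> FinVDset lt a' S.
Proof.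
  intros a S [n [c [H1 [H2 H3]]]] a' Ha. exists n, c. repeat split; auto.
  intros k; eapply VDset_level; eauto.
Qed.

Lemma FinVDset_subsingleton : forall a S, (forall x y, S x -> S y -> x = y) -> FinVDset lt a S.
Proof.
  intros a S H. exists 1, (fun _ => 0). repeat split; auto.
  intros k. apply VDset_subsingleton. intros x y [Hx _] [Hy _]. auto.
Qed.

End Closure.


(** Reversing the order preserves both notions (blocks are listed backwards). *)
Lemma VDset_dual {T : Type} (lt : T -> T -> Prop) :
  forall a S, VDset lt a S -> VDset (fun x y => lt y x) a S.
Proof.
  intros a S H; induction H as [a S H|a S x H Hu|a S blk b Hm Hb Hv IH].
  - apply VDset_empty; auto.
  - eapply VDset_single; eauto.
  - apply (VDset_sum _ _ _ (fun x => - blk x)%Z (fun z => b (- z)%Z)).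
    + intros x y Hx Hy Hxy. specialize (Hm y x Hy Hx Hxy). lia.
    + auto.
    + intros z. eapply VDset_ext; [apply (IH (- z)%Z)|].
      intros x; cbv beta; split; intros [? ?]; split; auto; lia.
Qed.

Lemma FinVDset_dual {T : Type} (lt : T -> T -> Prop) :
  forall a S, FinVDset lt a S -> FinVDset (fun x y => lt y x) a S.
Proof.
  intros a S [n [c [H1 [H2 H3]]]]. exists n, (fun x => n - 1 - c x). repeat split.
  - intros x Hx; specialize (H1 x Hx); lia.
  - intros x y Hx Hy Hxy; specialize (H2 y x Hy Hx Hxy); lia.
  - intros k. destruct (le_lt_dec n k).
    + apply VDset_empty. intros x [Hx Hk]. specialize (H1 x Hx). lia.
    + eapply VDset_ext; [apply VDset_dual, (H3 (n - 1 - k))|].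
      intros x. split; intros [Hx Hk]; split; auto; specialize (H1 x Hx); lia.
Qed.

Section LinearOrder.
Context {T : Type} (lt : T -> T -> Prop).
Hypothesis lt_irr : forall x, ~ lt x x.
Hypothesis lt_tr : forall x y z, lt x y -> lt y z -> lt x z.
Hypothesis lt_tot : forall x y, x <> y -> lt x y \/ lt y x.

Lemma rle_refl : forall x, rle lt x x.
Proof. right; auto. Qed.

Lemma rle_trans : forall x y z, rle lt x y -> rle lt y z -> rle lt x z.
Proof. unfold rle; intros x y z [H|H] [H'|H']; subst; eauto. Qed.

Lemma rle_antisym : forall x y, rle lt x y -> rle lt y x -> x = y.
Proof. unfold rle; intros x y [H|H] [H1|H1]; subst; auto. exfalso; apply (lt_irr x); eauto. Qed.

Lemma rle_or_gt : forall x y, rle lt x y \/ lt y x.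
Proof.
  intros x y. destruct (classic (x = y)) as [E|E]; [left; right; auto|].
  destruct (lt_tot x y E); [left; left|right]; auto.
Qed.

Lemma rle_lt_trans : forall x y z, rle lt x y -> lt y z -> lt x z.
Proof. unfold rle; intros x y z [H|H] H'; subst; eauto. Qed.

Lemma not_rle_gt : forall x y, ~ rle lt x y -> lt y x.
Proof. intros x y H. destruct (rle_or_gt x y); tauto. Qed.

Lemma lt_not_rle : forall x y, lt x y -> ~ rle lt y x.
Proof. intros x y H [H1|H1]; subst; apply (lt_irr x); eauto. Qed.

Lemma mono_rle_Z : forall (S : T -> Prop) (f : T -> Z),
  (forall x y, S x -> S y -> lt x y -> (f x <= f y)%Z) ->
  forall x y, S x -> S y -> rle lt x y -> (f x <= f y)%Z.
Proof. intros S f H x y Hx Hy [Hl|He]; subst; auto; lia. Qed.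

Lemma mono_rle_nat : forall (S : T -> Prop) (f : T -> nat),
  (forall x y, S x -> S y -> lt x y -> f x <= f y) ->
  forall x y, S x -> S y -> rle lt x y -> f x <= f y.
Proof. intros S f H x y Hx Hy [Hl|He]; subst; auto; lia. Qed.

(** First half of the local characterisation: in a VD_beta set, a closed
    interval with distinct end points meets only finitely many consecutive
    blocks, hence is a finite sum of sets of rank below [beta]. *)
Lemma VDset_interval : forall beta C, VDset lt beta C -> forall w z, C w -> C z -> rle lt w z ->
  w = z \/ exists g, olt g beta /\ FinVDset lt g (itv lt C w z).
Proof.
  intros beta C H.
  destruct H as [a D H|a D x H Hu|a D blk b Hm Hb Hv]; intros w z Hw Hz Hwz.
  - exfalso; eapply H; eauto.
  - left. rewrite (Hu w), (Hu z); auto.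
  - right. set (z0 := blk w).
    assert (Hwz' : (blk w <= blk z)%Z) by (eapply mono_rle_Z; eauto).
    assert (Hin : forall u, itv lt D w z u -> (blk w <= blk u <= blk z)%Z).
    { intros u [Hu [H1 H2]]. split; eapply mono_rle_Z; eauto. }
    set (N := Z.to_nat (blk z - z0)).
    destruct (olt_bound_upto a (fun i => b (z0 + Z.of_nat i)%Z) N) as [g [Hg1 Hg2]].
    { intros; apply Hb. }
    exists g; split; auto.
    exists (S N), (fun u => Z.to_nat (blk u - z0)). repeat split.
    + intros u Hu. specialize (Hin u Hu). unfold N. lia.
    + intros u v [Hu _] [Hv' _] Huv. specialize (Hm u v Hu Hv' Huv). lia.
    + intros k. destruct (le_lt_dec k N).
      * eapply VDset_sub; [eapply VDset_level; [apply (Hv (z0 + Z.of_nat k)%Z)|apply Hg2; auto]|].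
        intros u [Hu Hk]. split; [apply Hu|]. specialize (Hin u Hu). unfold z0 in *; lia.
      * apply VDset_empty. intros u [Hu Hk]. specialize (Hin u Hu). unfold N, z0 in *; lia.
Qed.

End LinearOrder.

(** [prefix_sum n m = n 0 + ... + n (m-1)]: offsets used to concatenate
    finite sums. *)
Fixpoint prefix_sum (n : nat -> nat) (m : nat) : nat :=
  match m with 0 => 0 | S m => prefix_sum n m + n m end.

Lemma prefix_sum_mono : forall n m m', m <= m' -> prefix_sum n m <= prefix_sum n m'.
Proof. intros n m m' H; induction H; simpl; lia. Qed.

Fixpoint running_max {T : Type} (lt : T -> T -> Prop) (e : nat -> option T) (x0 : T) (k : nat) : T :=
  match k with
  | 0 => x0
  | S k =>
      let m := running_max lt e x0 k in
      match e k with
      | Some x => if excluded_middle_informative (lt m x) then x else m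
      | None => m
      end
  end.

Section Halves.
Context {T : Type} (lt : T -> T -> Prop).
Hypothesis lt_irr : forall x, ~ lt x x.
Hypothesis lt_tr : forall x y z, lt x y -> lt y z -> lt x z.
Hypothesis lt_tot : forall x y, x <> y -> lt x y \/ lt y x.
Hypothesis countable : exists f : T -> nat, forall x y, f x = f y -> x = y.

(** An [omega]-sequence of finite sums of rank below [beta] is a [Z]-indexed
    sum of VD sets of rank below [beta]: concatenate the finite sums. *)
Lemma Zblocks_flatten : forall beta (P : T -> Prop) (blk : T -> nat),
  (exists g0, olt g0 beta) ->
  (forall x y, P x -> P y -> lt x y -> blk x <= blk y) ->
  (forall m, exists g, olt g beta /\ FinVDset lt g (fun x => P x /\ blk x = m)) ->
  exists L, Zblocks lt beta P L /\ forall x, P x -> (0 <= L x)%Z.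
Proof.
  intros beta P blk [g0 Hg0] Hm Hb.
  apply choice in Hb. destruct Hb as [G HG].
  assert (Hdec : forall m, exists p : nat * (T -> nat),
    (forall x, P x /\ blk x = m -> snd p x < fst p) /\
    (forall x y, P x /\ blk x = m -> P y /\ blk y = m -> lt x y -> snd p x <= snd p y) /\
    forall k, VDset lt (G m) (fun x => (P x /\ blk x = m) /\ snd p x = k)).
  { intros m. destruct (HG m) as [_ [n [c Hc]]]. exists (n, c). exact Hc. }
  apply choice in Hdec. destruct Hdec as [pc Hpc].
  set (nf := fun m => fst (pc m)). set (cf := fun m => snd (pc m)).
  set (L := fun x => Z.of_nat (prefix_sum nf (blk x) + cf (blk x) x)).
  assert (Hbd : forall x, P x -> cf (blk x) x < nf (blk x)).
  { intros x Hx. apply (proj1 (Hpc (blk x))). auto. }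
  assert (Hlt : forall x y, P x -> P y -> blk x < blk y -> (L x < L y)%Z).
  { intros x y Hx Hy H. unfold L. specialize (Hbd x Hx).
    assert (prefix_sum nf (S (blk x)) <= prefix_sum nf (blk y)) by (apply prefix_sum_mono; lia).
    simpl in *. lia. }
  exists L. split; [split|].
  - intros x y Hx Hy Hxy. specialize (Hm x y Hx Hy Hxy).
    destruct (Nat.eq_dec (blk x) (blk y)) as [E|E].
    + unfold L. rewrite E. assert (cf (blk y) x <= cf (blk y) y) by
        (apply (proj1 (proj2 (Hpc (blk y)))); auto). lia.
    + assert (L x < L y)%Z by (apply Hlt; auto; lia). lia.
  - intros z. destruct (classic (exists x, P x /\ L x = z)) as [[x [Hx Hz]]|Hno].
    + exists (G (blk x)). split; [apply HG|].
      eapply VDset_sub; [apply (proj2 (proj2 (Hpc (blk x))) (cf (blk x) x))|].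
      intros y [Hy Hyz].
      assert (E : blk y = blk x).
      { destruct (lt_eq_lt_dec (blk y) (blk x)) as [[E|E]|E]; auto.
        - specialize (Hlt y x Hy Hx E). lia.
        - specialize (Hlt x y Hx Hy E). lia. }
      split; [split; auto|]. fold (cf (blk x)). unfold L in Hz, Hyz. rewrite E in Hyz. lia.
    + exists g0. split; auto. apply VDset_empty. intros x Hx. apply Hno. eauto.
  - intros x Hx. unfold L. lia.
Qed.

(** In a countable order every subset [P] containing [x0] has a cofinal
    nondecreasing sequence starting at [x0]: the running maximum of an
    enumeration of [P]. *)
Lemma cofinal_chain : forall (P : T -> Prop) x0, P x0 ->
  exists u : nat -> T, u 0 = x0 /\ (forall k, P (u k)) /\
    (forall k m, k <= m -> rle lt (u k) (u m)) /\ (forall x, P x -> exists m, rle lt x (u m)).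
Proof.
  intros P x0 Px0. destruct countable as [f Hf].
  assert (He : exists e : nat -> option T, forall k x, e k = Some x <-> P x /\ f x = k).
  { apply (choice (fun k o => forall x, o = Some x <-> P x /\ f x = k)). intros k.
    destruct (classic (exists x, P x /\ f x = k)) as [[x [Px Hx]]|Hno].
    - exists (Some x). intros y; split.
      + intros E. injection E; intros; subst; auto.
      + intros [Py Hy]. f_equal. apply Hf. congruence.
    - exists None. intros y; split; [discriminate|]. intros Hy; exfalso; eauto. }
  destruct He as [e He].
  set (u := running_max lt e x0).
  assert (Pu : forall k, P (u k)).
  { induction k as [|k IH]; [exact Px0|]. unfold u; simpl; fold u.
    destruct (e k) eqn:E; [|exact IH].
    destruct (excluded_middle_informative _); [apply He in E; apply E|exact IH]. }
  assert (Ustep : forall k, rle lt (u k) (u (S k))).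
  { intros k. unfold u at 2; simpl; fold u.
    destruct (e k); [destruct (excluded_middle_informative _); [left; auto|]|]; apply rle_refl. }
  exists u. repeat split; auto.
  - intros k m H; induction H; [apply rle_refl|eapply rle_trans; eauto].
  - intros x Hx. exists (S (f x)). unfold u; simpl; fold u.
    rewrite (proj2 (He (f x) x) (conj Hx eq_refl)).
    destruct (excluded_middle_informative _) as [_|Hn]; [apply rle_refl|].
    destruct (rle_or_gt lt lt_tot x (u (f x))) as [H'|H']; [auto|contradiction].
Qed.

(** The part of [K] above a point [x0] is a [Z]-sum of lower-rank blocks,
    provided all intervals of [K] are small: cut it along a cofinal chain;
    the pieces between consecutive chain points are finite sums of lower
    rank, which [Zblocks_flatten] concatenates. *)
Lemma upper_half : forall beta (K : T -> Prop) x0, K x0 -> (exists g0, olt g0 beta) ->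
  small_intervals lt beta K ->
  exists L, Zblocks lt beta (fun x => K x /\ rle lt x0 x) L /\
    forall x, K x /\ rle lt x0 x -> (0 <= L x)%Z.
Proof.
  intros beta K x0 Hx0 G0 HK.
  set (P := fun x => K x /\ rle lt x0 x).
  destruct (cofinal_chain P x0) as [u [Hu0 [Pu [Umono Ucof]]]]; [split; auto using rle_refl|].
  (* [blk x] is the first index of the chain that reaches [x] *)
  assert (Hblk : forall x, exists m, P x -> rle lt x (u m) /\ forall k, rle lt x (u k) -> m <= k).
  { intros x. destruct (classic (P x)) as [Hx|Hx]; [|exists 0; tauto].
    destruct (dec_inh_nat_subset_has_unique_least_element (fun m => rle lt x (u m)))
      as [m [[Hm Hleast] _]]; [intros; apply classic|apply Ucof, Hx|].
    exists m; auto. }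
  apply choice in Hblk. destruct Hblk as [blk Hblk].
  apply (Zblocks_flatten beta P blk G0).
  - intros x y Hx Hy Hxy. destruct (le_lt_dec (blk x) (blk y)) as [H|H]; auto. exfalso.
    destruct (Hblk y Hy) as [Hy1 _]. destruct (Hblk x Hx) as [_ Hx2].
    destruct (rle_or_gt lt lt_tot x (u (blk y))) as [H'|H'].
    + specialize (Hx2 _ H'). lia.
    + apply (lt_irr y). eapply rle_lt_trans; eauto.
  - intros [|m].
    + (* block 0 is {x0} *)
      destruct G0 as [g0 Hg0]. exists g0. split; [exact Hg0|]. apply FinVDset_subsingleton. intros x y [Px Hx] [Py Hy].
      destruct (Hblk x Px) as [H1 _]. destruct (Hblk y Py) as [H2 _].
      rewrite Hx, Hu0 in H1. rewrite Hy, Hu0 in H2.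
      apply (rle_antisym lt lt_irr lt_tr) in H1; [|apply Px].
      apply (rle_antisym lt lt_irr lt_tr) in H2; [|apply Py]. congruence.
    + (* block m+1 lies in the half-open interval (u m, u (m+1)] *)
      assert (Hsub : forall x, P x /\ blk x = S m -> itv lt K (u m) (u (S m)) x /\ lt (u m) x).
      { intros x [Hx Hbx]. destruct (Hblk x Hx) as [H1 H2]. rewrite Hbx in H1.
        assert (lt (u m) x) by (apply (not_rle_gt lt lt_tot); intros H; specialize (H2 m H); lia).
        repeat split; auto; [apply Hx|left; auto]. }
      destruct (HK (u m) (u (S m))) as [E|[g [Hg1 Hg2]]]; try apply Pu; auto.
      * destruct G0 as [g0 Hg0]. exists g0; split; auto. apply FinVDset_subsingleton.
        intros x y Hx Hy. exfalso. destruct (Hsub x Hx) as [[_ [_ H1]] H2]. rewrite <- E in H1.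
        apply (lt_not_rle lt lt_irr lt_tr _ _ H2); auto.
      * exists g; split; auto. eapply FinVDset_sub; [exact Hg2|]. intros x Hx. apply Hsub; auto.
Qed.

End Halves.

Section Intervals.
Context {T : Type} (lt : T -> T -> Prop).
Hypothesis lt_irr : forall x, ~ lt x x.
Hypothesis lt_tr : forall x y z, lt x y -> lt y z -> lt x z.
Hypothesis lt_tot : forall x y, x <> y -> lt x y \/ lt y x.
Hypothesis countable : exists f : T -> nat, forall x y, f x = f y -> x = y.

(** Gluing: a [Z]-sum above [x0] (labels [>= 0]) and a [Z]-sum below [x0]
    for the reversed order (labels [>= 0]) combine into a [Z]-sum of [K],
    the lower part being relabelled by negative integers. *)
Lemma Zblocks_glue : forall beta (K : T -> Prop) x0 L1 L2,
  Zblocks lt beta (fun x => K x /\ rle lt x0 x) L1 ->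
  (forall x, K x /\ rle lt x0 x -> (0 <= L1 x)%Z) ->
  Zblocks (fun x y => lt y x) beta (fun x => K x /\ rle (fun x y => lt y x) x0 x) L2 ->
  (forall x, K x /\ rle (fun x y => lt y x) x0 x -> (0 <= L2 x)%Z) ->
  exists L, Zblocks lt beta K L.
Proof.
  intros beta K x0 L1 L2 [M1 B1] N1 [M2 B2] N2.
  set (L := fun x => if excluded_middle_informative (rle lt x0 x) then L1 x else (- L2 x - 1)%Z).
  assert (Lp : forall x, rle lt x0 x -> L x = L1 x).
  { intros x H. unfold L. destruct (excluded_middle_informative _); tauto. }
  assert (Ln : forall x, ~ rle lt x0 x -> L x = (- L2 x - 1)%Z).
  { intros x H. unfold L. destruct (excluded_middle_informative _); tauto. }
  assert (Hop : forall x, ~ rle lt x0 x -> rle (fun x y => lt y x) x0 x).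
  { intros x H. left. apply (not_rle_gt lt lt_tot); auto. }
  exists L. split.
  - intros x y Hx Hy Hxy.
    destruct (classic (rle lt x0 x)) as [Ax|Ax]; destruct (classic (rle lt x0 y)) as [Ay|Ay].
    + rewrite Lp, Lp; auto.
    + exfalso. apply Ay. eapply (rle_trans lt lt_tr); [exact Ax|left; auto].
    + rewrite Ln, Lp; auto. specialize (N1 y (conj Hy Ay)). specialize (N2 x (conj Hx (Hop x Ax))). lia.
    + rewrite Ln, Ln; auto. specialize (M2 y x (conj Hy (Hop y Ay)) (conj Hx (Hop x Ax)) Hxy). lia.
  - intros z. destruct (Z_le_gt_dec 0 z) as [Hz|Hz].
    + destruct (B1 z) as [b [Hb1 Hb2]]. exists b; split; auto. eapply VDset_sub; [exact Hb2|].
      intros x [Hx Hxz]. destruct (classic (rle lt x0 x)) as [Ax|Ax].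
      * rewrite Lp in Hxz; auto.
      * rewrite Ln in Hxz; auto. specialize (N2 x (conj Hx (Hop x Ax))). lia.
    + destruct (B2 (- z - 1)%Z) as [b [Hb1 Hb2]]. exists b; split; auto.
      apply VDset_dual in Hb2. eapply VDset_sub; [exact Hb2|].
      intros x [Hx Hxz]. destruct (classic (rle lt x0 x)) as [Ax|Ax].
      * rewrite Lp in Hxz; auto. specialize (N1 x (conj Hx Ax)). lia.
      * rewrite Ln in Hxz; auto. split; [split; auto|lia].
Qed.

Lemma small_intervals_dual : forall beta K,
  small_intervals lt beta K -> small_intervals (fun x y => lt y x) beta K.
Proof.
  intros beta K HK x y Hx Hy Hxy. destruct (HK y x Hy Hx) as [E|[g [Hg1 Hg2]]].
  - destruct Hxy; [left; auto|right; auto].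
  - left; auto.
  - right. exists g; split; auto. eapply FinVDset_ext; [apply FinVDset_dual; exact Hg2|].
    intros u. unfold itv, rle. split; intros [A [B C]]; repeat split; auto; destruct B, C; auto.
Qed.

(** Split it at a point [x0] and decompose both
    halves with [upper_half] (the lower one for the reversed order). *)
Lemma VDset_of_intervals : forall beta K, small_intervals lt beta K -> VDset lt beta K.
Proof.
  intros beta K HK.
  destruct (classic (forall x y, K x -> K y -> x = y)) as [Hs|Hs]; [apply VDset_subsingleton; auto|].
  assert (Hxy : exists x y, K x /\ K y /\ x <> y).
  { apply NNPP; intros Hn; apply Hs; intros x y Hx Hy; apply NNPP; intros Hne; apply Hn; eauto. }
  destruct Hxy as [x0 [y0 [Hx0 [Hy0 Hne]]]].
  (* the interval between two distinct points provides a rank below [beta] *)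
  assert (G0 : exists g0, olt g0 beta).
  { destruct (rle_or_gt lt lt_tot x0 y0) as [H|H].
    - destruct (HK x0 y0 Hx0 Hy0 H) as [E|[g [Hg _]]]; [contradiction|eauto].
    - destruct (HK y0 x0 Hy0 Hx0 (or_introl H)) as [E|[g [Hg _]]]; [congruence|eauto]. }
  destruct (upper_half lt lt_irr lt_tr lt_tot countable beta K x0 Hx0 G0 HK) as [L1 [Z1 N1]].
  destruct (upper_half (fun x y => lt y x) lt_irr (fun x y z H1 H2 => lt_tr z y x H2 H1)
              (fun x y E => proj1 (or_comm _ _) (lt_tot x y E)) countable beta K x0 Hx0 G0
              (small_intervals_dual beta K HK)) as [L2 [Z2 N2]].
  destruct (Zblocks_glue beta K x0 L1 L2 Z1 N1 Z2 N2) as [L HL].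
  exact (VDset_of_Zblocks lt beta K L HL).
Qed.

Lemma FinVDset_of_labelling : forall beta S (c : T -> nat) N, (forall x, S x -> c x < N) ->
  (forall x y, S x -> S y -> lt x y -> c x <= c y) ->
  (forall x y, S x -> S y -> rle lt x y -> c x = c y ->
     x = y \/ exists g, olt g beta /\ FinVDset lt g (itv lt S x y)) ->
  FinVDset lt beta S.
Proof.
  intros beta S c N Hb Hm Hp. exists N, c. repeat split; auto.
  intros k. apply VDset_of_intervals. intros x y [Hx Hxk] [Hy Hyk] Hxy.
  destruct (Hp x y Hx Hy Hxy) as [E|[g [Hg1 Hg2]]]; [congruence|left; auto|].
  right. exists g. split; auto. eapply FinVDset_sub; [exact Hg2|].
  intros u [[Hu _] Hu2]. split; auto.
Qed.

End Intervals.

(** ** Finite sums of rank [beta] are closed under finite unions *)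

Fixpoint count_below (P : nat -> Prop) (n : nat) : nat :=
  match n with
  | 0 => 0
  | S n => count_below P n + (if excluded_middle_informative (P n) then 1 else 0)
  end.

Lemma count_below_le : forall P n, count_below P n <= n.
Proof. intros P n; induction n; simpl; auto. destruct (excluded_middle_informative _); lia. Qed.

Lemma count_below_mono : forall P Q n, (forall l, l < n -> P l -> Q l) -> count_below P n <= count_below Q n.
Proof.
  intros P Q n; induction n as [|n IH]; intros H; simpl; auto.
  specialize (IH (fun l Hl => H l (Nat.lt_lt_succ_r _ _ Hl))).
  destruct (excluded_middle_informative (P n)); destruct (excluded_middle_informative (Q n)); try lia.
  exfalso; eauto.
Qed.

Lemma count_below_eq : forall P Q n, (forall l, l < n -> P l -> Q l) ->
  count_below P n = count_below Q n -> forall l, l < n -> Q l -> P l.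
Proof.
  intros P Q n; induction n as [|n IH]; intros H E l Hl Hq; [lia|]. simpl in E.
  assert (H' : forall l, l < n -> P l -> Q l) by (intros; apply H; auto).
  pose proof (count_below_mono P Q n H').
  destruct (excluded_middle_informative (P n)); destruct (excluded_middle_informative (Q n));
    try (exfalso; eauto; fail).
  - destruct (Nat.eq_dec l n); [subst; auto|]. apply IH; auto; lia.
  - lia.
  - destruct (Nat.eq_dec l n); [subst; contradiction|]. apply IH; auto; lia.
Qed.

Section Union.
Context {T : Type} (lt : T -> T -> Prop).
Hypothesis lt_irr : forall x, ~ lt x x.
Hypothesis lt_tr : forall x y z, lt x y -> lt y z -> lt x z.
Hypothesis lt_tot : forall x y, x <> y -> lt x y \/ lt y x.
Hypothesis countable : exists f : T -> nat, forall x y, f x = f y -> x = y.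

Definition reached (S : T -> Prop) (c : T -> nat) (n : nat) (x : T) : nat :=
  count_below (fun l => exists u, S u /\ rle lt u x /\ l <= c u) n.

Definition cleared (S : T -> Prop) (c : T -> nat) (n : nat) (x : T) : nat :=
  count_below (fun l => ~ exists u, S u /\ rle lt x u /\ c u <= l) n.

Lemma reached_mono : forall S c n x y, rle lt x y -> reached S c n x <= reached S c n y.
Proof.
  intros. apply count_below_mono. intros l _ [u [A [B C]]].
  exists u; repeat split; auto. eapply rle_trans; eauto.
Qed.

Lemma cleared_mono : forall S c n x y, rle lt x y -> cleared S c n x <= cleared S c n y.
Proof.
  intros. apply count_below_mono. intros l _ Hn [u [A [B C]]].
  apply Hn. exists u; repeat split; auto. eapply rle_trans; eauto.
Qed.

(** If both counts agree at [x <= y], all points of [S] in [[x, y]] lie in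
    one level [l], squeezed between points [w <= x] and [z >= y] of that
    level; so [[x, y]] lies in an interval of the VD_beta set of level [l]
    and is small by [VDset_interval] (or is empty or trivial). *)
Lemma equal_counts_interval : forall beta S c n, (forall x, S x -> c x < n) ->
  (forall x y, S x -> S y -> lt x y -> c x <= c y) -> (forall l, VDset lt beta (fun x => S x /\ c x = l)) ->
  forall x y, rle lt x y -> reached S c n x = reached S c n y -> cleared S c n x = cleared S c n y ->
  (forall v, ~ itv lt S x y v) \/ x = y \/ exists g, olt g beta /\ FinVDset lt g (itv lt S x y).
Proof.
  intros beta S c n Hb Hm Hv x y Hxy HD HE.
  destruct (classic (exists v, itv lt S x y v)) as [[u [Su [Hxu Huy]]]|Hno];
    [right|left; intros v Hv'; apply Hno; eauto].
  assert (Hw : exists w, S w /\ rle lt w x /\ c u <= c w).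
  { refine (count_below_eq (fun l => exists u, S u /\ rle lt u x /\ l <= c u)
              (fun l => exists u, S u /\ rle lt u y /\ l <= c u) n _ HD (c u) (Hb u Su) _).
    - intros l _ [w [A [B C]]]. exists w; repeat split; auto. eapply rle_trans; eauto.
    - exists u; repeat split; auto. }
  assert (Hz : exists z, S z /\ rle lt y z /\ c z <= c u).
  { apply NNPP. intros Hn.
    refine (count_below_eq (fun l => ~ exists u, S u /\ rle lt x u /\ c u <= l)
              (fun l => ~ exists u, S u /\ rle lt y u /\ c u <= l) n _ HE (c u) (Hb u Su) Hn _).
    - intros l _ Hn' [w [A [B C]]]. apply Hn'. exists w; repeat split; auto.
      apply (rle_trans lt lt_tr x y w); auto.
    - exists u; repeat split; auto. }
  destruct Hw as [w [Sw [Hwx Hcw]]]. destruct Hz as [z [Sz [Hyz Hcz]]].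
  pose proof (mono_rle_nat lt S c Hm) as Hmono.
  assert (Hall : forall v, itv lt S x y v -> c v = c u).
  { intros v [Sv [H1 H2]].
    pose proof (Hmono w v Sw Sv (rle_trans lt lt_tr w x v Hwx H1)).
    pose proof (Hmono v z Sv Sz (rle_trans lt lt_tr v y z H2 Hyz)). lia. }
  assert (Ecw : c w = c u) by (pose proof (Hmono w u Sw Su (rle_trans lt lt_tr w x u Hwx Hxu)); lia).
  assert (Ecz : c z = c u) by (pose proof (Hmono u z Su Sz (rle_trans lt lt_tr u y z Huy Hyz)); lia).
  assert (Hwz : rle lt w z) by (apply (rle_trans lt lt_tr w x z Hwx (rle_trans lt lt_tr x y z Hxy Hyz))).
  destruct (VDset_interval lt beta _ (Hv (c u)) w z (conj Sw Ecw) (conj Sz Ecz) Hwz)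
    as [E|[g [Hg1 Hg2]]].
  - left. subst z. apply (rle_antisym lt lt_irr lt_tr); auto. apply (rle_trans lt lt_tr y w x Hyz Hwx).
  - right. exists g; split; auto. eapply FinVDset_sub; [exact Hg2|].
    intros v Hv'. pose proof (Hall v Hv') as Ev. destruct Hv' as [Sv [H1 H2]].
    repeat split; auto; [apply (rle_trans lt lt_tr w x v Hwx H1)|apply (rle_trans lt lt_tr v y z H2 Hyz)].
Qed.

(** By induction on [beta]: label the union by the sum of
    the four counting functions; points with equal labels have intervals that
    are unions of small intervals of [S1] and of [S2], which are small by the
    induction hypothesis, and [FinVDset_of_labelling] concludes. *)
Lemma FinVDset_union : forall beta S1 S2,
  FinVDset lt beta S1 -> FinVDset lt beta S2 -> FinVDset lt beta (fun x => S1 x \/ S2 x).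
Proof.
  intros beta. induction beta as [beta IH] using (well_founded_induction olt_wf).
  intros S1 S2 [n1 [c1 [B1 [M1 V1]]]] [n2 [c2 [B2 [M2 V2]]]].
  set (c := fun x => reached S1 c1 n1 x + cleared S1 c1 n1 x + reached S2 c2 n2 x + cleared S2 c2 n2 x).
  assert (Hcmono : forall x y, rle lt x y ->
    reached S1 c1 n1 x <= reached S1 c1 n1 y /\ cleared S1 c1 n1 x <= cleared S1 c1 n1 y /\
    reached S2 c2 n2 x <= reached S2 c2 n2 y /\ cleared S2 c2 n2 x <= cleared S2 c2 n2 y).
  { intros x y Hxy. repeat split; auto using reached_mono, cleared_mono. }
  apply (FinVDset_of_labelling lt lt_irr lt_tr lt_tot countable beta _ c (2 * (n1 + n2) + 1)).
  - intros x _. unfold c, reached, cleared.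
    pose proof (count_below_le (fun l => exists u, S1 u /\ rle lt u x /\ l <= c1 u) n1).
    pose proof (count_below_le (fun l => ~ exists u, S1 u /\ rle lt x u /\ c1 u <= l) n1).
    pose proof (count_below_le (fun l => exists u, S2 u /\ rle lt u x /\ l <= c2 u) n2).
    pose proof (count_below_le (fun l => ~ exists u, S2 u /\ rle lt x u /\ c2 u <= l) n2). lia.
  - intros x y _ _ Hxy. unfold c. pose proof (Hcmono x y (or_introl Hxy)). lia.
  - intros x y Hx Hy Hxy Hc. unfold c in Hc. pose proof (Hcmono x y Hxy).
    destruct (equal_counts_interval beta S1 c1 n1 B1 M1 V1 x y Hxy ltac:(lia) ltac:(lia))
      as [P1|[P1|[g1 [G1 F1]]]];
    destruct (equal_counts_interval beta S2 c2 n2 B2 M2 V2 x y Hxy ltac:(lia) ltac:(lia))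
      as [P2|[P2|[g2 [G2 F2]]]];
    try (left; assumption); right.
    + exfalso. destruct Hx as [Hx|Hx]; [apply (P1 x)|apply (P2 x)];
        repeat split; auto; apply rle_refl.
    + exists g2; split; auto. eapply FinVDset_ext.
      * apply (IH g2 G2); [|exact F2]. apply FinVDset_subsingleton.
        intros u v Hu. exfalso; eapply P1; eauto.
      * intros u. unfold itv. tauto.
    + exists g1; split; auto. eapply FinVDset_ext.
      * apply (IH g1 G1); [exact F1|]. apply FinVDset_subsingleton.
        intros u v Hu. exfalso; eapply P2; eauto.
      * intros u. unfold itv. tauto.
    + destruct (olt_bound2 beta g1 g2 G1 G2) as [g [Hg [Hg1 Hg2]]].
      exists g; split; auto. eapply FinVDset_ext.
      * apply (IH g Hg); [exact (FinVDset_level lt g1 _ F1 g Hg1)|exact (FinVDset_level lt g2 _ F2 g Hg2)].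
      * intros u. unfold itv. tauto.
Qed.

Lemma FinVDset_union_upto : forall beta (Si : nat -> T -> Prop) m,
  (forall j, j < m -> FinVDset lt beta (Si j)) ->
  FinVDset lt beta (fun x => exists j, j < m /\ Si j x).
Proof.
  intros beta Si m; induction m as [|m IH]; intros H.
  - apply FinVDset_subsingleton. intros x y [j [Hj _]]; lia.
  - eapply FinVDset_ext;
      [apply (FinVDset_union beta (fun x => exists j, j < m /\ Si j x) (Si m));
         [apply IH; intros; apply H; lia|apply H; lia]|].
    intros x; split.
    + intros [[j [Hj Hs]]|Hs]; [exists j|exists m]; split; auto; lia.
    + intros [j [Hj Hs]]. destruct (Nat.eq_dec j m) as [->|Hne]; [right; auto|].
      left; exists j; split; auto; lia.
Qed.

Lemma FinVDset_of_partition : forall beta n (part : T -> fin_idx n),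
  (forall i, FinVDset lt beta (fun x => part x = i)) -> FinVDset lt beta (fun _ => True).
Proof.
  intros beta n part H.
  eapply FinVDset_ext; [apply (FinVDset_union_upto beta (fun j x => proj1_sig (part x) = j) n)|].
  - intros j Hj. eapply FinVDset_ext; [apply (H (exist _ j Hj))|]. intros x; split.
    + intros E. rewrite E. reflexivity.
    + intros E. apply eq_sig_hprop; [intros; apply proof_irrelevance|exact E].
  - intros x; split; auto. intros _. exists (proj1_sig (part x)). split; auto. apply (proj2_sig (part x)).
Qed.

End Union.

(** ** From abstract orderings to subsets and back *)

Lemma sig_ext {X : Type} {P : X -> Prop} (u v : {x | P x}) : proj1_sig u = proj1_sig v -> u = v.
Proof. apply eq_sig_hprop. intros; apply proof_irrelevance. Qed.

Definition subLO (X : LO) (S : car X -> Prop) : LO.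
Proof.
  refine (mkLO {x : car X | S x} (fun u v => rel X (proj1_sig u) (proj1_sig v)) _ _ _ _).
  - intros u; apply rel_irrefl.
  - intros u v w; apply rel_trans.
  - intros u v Hne. apply rel_total. intros E. apply Hne, sig_ext, E.
  - destruct (car_countable X) as [f Hf]. exists (fun u => f (proj1_sig u)).
    intros u v E. apply sig_ext, Hf, E.
Defined.

Lemma iso_trans : forall X rX Y rY Z rZ, Iso X rX Y rY -> Iso Y rY Z rZ -> Iso X rX Z rZ.
Proof.
  intros X rX Y rY Z rZ [f [[fi fs] fo]] [g [[gi gs] go]]. exists (fun x => g (f x)). split; [split|].
  - intros x y E; auto.
  - intros z. destruct (gs z) as [y Hy]. destruct (fs y) as [x Hx]. exists x; congruence.
  - intros x y. rewrite fo, go. tauto.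
Qed.

Lemma FinSumOf_iso : forall P (X Y : LO), FinSumOf P X -> Iso (car X) (rel X) (car Y) (rel Y) -> FinSumOf P Y.
Proof. intros P X Y [n [F [HF Hs]]] Hi. exists n, F. split; auto. eapply iso_trans; eauto. Qed.

Lemma subLO_full_iso : forall X,
  Iso (car (subLO X (fun _ => True))) (rel (subLO X (fun _ => True))) (car X) (rel X).
Proof.
  intros X. exists (fun u => proj1_sig u). split; [split|].
  - intros u v E. apply sig_ext, E.
  - intros y. exists (exist _ y I). reflexivity.
  - intros u v; simpl; tauto.
Qed.

Lemma subLO_sum : forall (X : LO) (S : car X -> Prop) (I : Type) (ltI : I -> I -> Prop) (blk : car X -> I),
  (forall i, ~ ltI i i) -> (forall i j, ltI i j -> ~ ltI j i) ->
  (forall x y, S x -> S y -> rel X x y -> blk x = blk y \/ ltI (blk x) (blk y)) ->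
  IsSum I ltI (fun i => subLO X (fun x => S x /\ blk x = i)) (subLO X S).
Proof.
  intros X S I ltI blk Hirr Has Hm.
  exists (fun s => match s with existT _ i u => exist S (proj1_sig u) (proj1 (proj2_sig u)) end).
  split; [split|].
  - intros [i [x [p e]]] [j [y [q e']]]; simpl. intros E. injection E; intros; subst.
    assert (p = q) by apply proof_irrelevance. subst. reflexivity.
  - intros [x p]. exists (existT _ (blk x) (exist _ x (conj p eq_refl))). apply sig_ext. reflexivity.
  - intros [i [x [p e]]] [j [y [q e']]]; simpl. unfold lexlt; simpl. split.
    + intros [H|[E H]].
      * subst. destruct (classic (x = y)) as [Exy|Nxy]; [subst; exfalso; eapply Hirr; eauto|].
        destruct (rel_total X x y Nxy) as [H'|H']; auto.
        destruct (Hm y x q p H') as [E|E]; [rewrite E in H; exfalso; eapply Hirr; eauto|].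
        exfalso; eapply Has; eauto.
      * destruct E. exact H.
    + intros H. destruct (Hm x y p q H) as [E|E].
      * right. assert (Hij : i = j) by congruence. destruct Hij. exists eq_refl. exact H.
      * left. subst. exact E.
Qed.

(** A [VDset] of [X] is VD as a suborder: its [Z]-sums are [zeta]-sums. *)
Lemma VDset_to_VD : forall (X : LO) a S, VDset (rel X) a S -> VD a (subLO X S).
Proof.
  intros X a S H; induction H as [a S H|a S x H Hu|a S blk b Hm Hb Hv IH].
  - apply VD_zero. intros [x p]. eapply H; eauto.
  - apply VD_one. exists (exist _ x H). intros [y q]. apply sig_ext. simpl. auto.
  - apply (VD_zeta a (subLO X S) (fun z => subLO X (fun x => S x /\ blk x = z))).
    + intros z. exists (b z); split; auto.
    + apply subLO_sum; [intros i; lia|intros; lia|].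
      intros x y Hx Hy Hxy. specialize (Hm x y Hx Hy Hxy). lia.
Qed.

Lemma FinVDset_to_FinSumOf : forall (X : LO) a D, FinVDset (rel X) a D -> FinSumOf (VD a) (subLO X D).
Proof.
  intros X a D [n [c [Hb [Hm Hv]]]].
  (* the labels, as elements of [fin_idx (S n)] (out-of-range points go last) *)
  set (blk := fun x => match lt_dec (c x) n with
                       | left h => exist (fun k => k < S n) (c x) (Nat.lt_lt_succ_r _ _ h)
                       | right _ => exist (fun k => k < S n) n (Nat.lt_succ_diag_r n) end).
  assert (Hbv : forall x, D x -> proj1_sig (blk x) = c x).
  { intros x Hx. unfold blk. destruct (lt_dec (c x) n) as [|Hn]; [reflexivity|exfalso; apply Hn; auto]. }
  exists (S n), (fun i => subLO X (fun x => D x /\ blk x = i)). split.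
  - intros [k hk]. apply VDset_to_VD. eapply VDset_ext; [apply (Hv k)|].
    intros x; split.
    + intros [Hx Hc]. split; auto. apply sig_ext. simpl. rewrite Hbv; auto.
    + intros [Hx Hc]. split; auto. rewrite <- Hbv, Hc; auto.
  - apply subLO_sum; [intros i; unfold fin_lt; lia|intros i j; unfold fin_lt; lia|].
    intros x y Hx Hy Hxy. specialize (Hm x y Hx Hy Hxy).
    destruct (Nat.eq_dec (c x) (c y)) as [E|E].
    + left. apply sig_ext. rewrite !Hbv; auto.
    + right. unfold fin_lt. rewrite !Hbv; auto. lia.
Qed.

(** Induction principle for [VD] whose hypotheses see through the nested
    existential quantifier on the ranks of the summands. *)
Definition VD_ind_nested (P : ord -> LO -> Prop)
  (Hz : forall a A, (car A -> False) -> P a A)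
  (Ho : forall a A, (exists x : car A, forall y, y = x) -> P a A)
  (Hf : forall a A n F, (forall i, exists b, olt b a /\ P b (F i)) -> IsSum (fin_idx n) fin_lt F A -> P a A)
  (Hw : forall a A F, (forall i, exists b, olt b a /\ P b (F i)) -> IsSum nat Peano.lt F A -> P a A)
  (Hws : forall a A F, (forall i, exists b, olt b a /\ P b (F i)) ->
         IsSum nat (fun i j => (j < i)%nat) F A -> P a A)
  (Hzt : forall a A F, (forall i, exists b, olt b a /\ P b (F i)) -> IsSum Z Z.lt F A -> P a A)
  : forall a A, VD a A -> P a A :=
  fix rec a A (d : VD a A) {struct d} : P a A :=
  let sub a {I : Type} (F : I -> LO) (h : forall i, exists b, olt b a /\ VD b (F i)) i
        : exists b, olt b a /\ P b (F i) :=
    match h i with ex_intro _ b (conj hb hv) => ex_intro _ b (conj hb (rec b (F i) hv)) end in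
  match d with
  | VD_zero a A h => Hz a A h
  | VD_one a A h => Ho a A h
  | VD_fin a A n F h s => Hf a A n F (sub a F h) s
  | VD_omega a A F h s => Hw a A F (sub a F h) s
  | VD_omegastar a A F h s => Hws a A F (sub a F h) s
  | VD_zeta a A F h s => Hzt a A F (sub a F h) s
  end.

Definition embedding (X : LO) {T : Type} (lt : T -> T -> Prop) (e : car X -> T) : Prop :=
  forall x y, rel X x y <-> lt (e x) (e y).

Definition img {X T : Type} (f : X -> T) (t : T) : Prop := exists x, f x = t.

Lemma embedding_inj : forall (A : LO) T (lt : T -> T -> Prop) (e : car A -> T),
  embedding A lt e -> forall x y, e x = e y -> x = y.
Proof.
  intros A T lt e He x y E. apply NNPP; intros Hne.
  destruct (rel_total A x y Hne) as [H|H]; apply He in H; rewrite E in H; apply He in H;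
    eapply rel_irrefl; eauto.
Qed.

Lemma embedded_sum_blocks : forall (A : LO) (I : Type) (ltI : I -> I -> Prop) (F : I -> LO) (ix : I -> Z)
  T (lt : T -> T -> Prop) (e : car A -> T),
  (forall i j, ltI i j -> (ix i < ix j)%Z) -> (forall i j, ix i = ix j -> i = j) ->
  IsSum I ltI F A -> embedding A lt e ->
  exists blk : T -> Z,
   (forall t t', img e t -> img e t' -> lt t t' -> (blk t <= blk t')%Z) /\
   (forall t, img e t -> exists i, ix i = blk t) /\
   (forall i, exists ei : car (F i) -> T, embedding (F i) lt ei /\
       forall t, (img e t /\ blk t = ix i) <-> img ei t).
Proof.
  intros A I ltI F ix T lt e Hix Hinj [phi [[phi_i phi_s] phi_o]] He.
  pose proof (embedding_inj A T lt e He) as einj.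
  red in He.
  (* the block of [t = e (phi (i, y))] is [ix i] *)
  assert (Hb : forall t, exists z, forall s, e (phi s) = t -> ix (projT1 s) = z).
  { intros t. destruct (classic (exists s, e (phi s) = t)) as [[s Hs]|Hn].
    - exists (ix (projT1 s)). intros s' Hs'. rewrite <- Hs in Hs'. apply einj, phi_i in Hs'. subst; auto.
    - exists 0%Z. intros s Hs; exfalso; eauto. }
  apply choice in Hb. destruct Hb as [blk Hblk].
  exists blk. split; [|split].
  - intros t t' [x Hx] [x' Hx'] Hlt. destruct (phi_s x) as [s Hs]. destruct (phi_s x') as [s' Hs'].
    subst. rewrite <- (Hblk _ s eq_refl), <- (Hblk _ s' eq_refl).
    apply He, phi_o in Hlt. destruct Hlt as [H|[E H]]; [apply Hix in H; lia|rewrite E; lia].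
  - intros t [x Hx]. destruct (phi_s x) as [s Hs]. subst. exists (projT1 s). apply Hblk; auto.
  - intros i. exists (fun y => e (phi (existT _ i y))). split.
    + intros y y'. rewrite <- He, <- phi_o. unfold lexlt; simpl. split.
      * intros H. right. exists eq_refl. exact H.
      * intros [H|[E H]]; [apply Hix in H; lia|].
        rewrite (proof_irrelevance _ E eq_refl) in H. exact H.
    + intros t. split.
      * intros [[x Hx] Hbt]. destruct (phi_s x) as [[j y] Hs]. subst.
        rewrite <- (Hblk _ _ eq_refl) in Hbt. simpl in Hbt. apply Hinj in Hbt. subst. exists y; auto.
      * intros [y Hy]. subst. split; [eexists; eauto|]. apply eq_sym, (Hblk _ (existT _ i y)); auto.
Qed.

Lemma VDset_of_embedded_sum : forall a (A : LO) (I : Type) (ltI : I -> I -> Prop) (F : I -> LO) (ix : I -> Z),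
  (forall i j, ltI i j -> (ix i < ix j)%Z) -> (forall i j, ix i = ix j -> i = j) ->
  (forall i, exists b, olt b a /\ forall T (lt : T -> T -> Prop) (e : car (F i) -> T),
      embedding (F i) lt e -> VDset lt b (img e)) ->
  IsSum I ltI F A ->
  forall T (lt : T -> T -> Prop) (e : car A -> T), embedding A lt e -> VDset lt a (img e).
Proof.
  intros a A I ltI F ix Hix Hinj IH Hs T lt e He.
  destruct (embedded_sum_blocks A I ltI F ix T lt e Hix Hinj Hs He) as [blk [Hm [Hr Hbl]]].
  destruct (classic (exists t, img e t)) as [[t0 Ht0]|Hno];
    [|apply VDset_empty; intros t Ht; apply Hno; eauto].
  destruct (Hr t0 Ht0) as [i0 _]. destruct (IH i0) as [b0 [Hb0 _]].
  apply (VDset_of_Zblocks lt a (img e) blk). split; [exact Hm|].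
  intros z. destruct (classic (exists i, ix i = z)) as [[i Hi]|Hn].
  - subst z. destruct (IH i) as [b [Hb HV]]. destruct (Hbl i) as [ei [Hei Himg]].
    exists b; split; auto. eapply VDset_ext; [apply (HV T lt ei Hei)|]. intros t; rewrite Himg; tauto.
  - exists b0; split; auto. apply VDset_empty. intros t [Ht Hz]. destruct (Hr t Ht) as [i Hi].
    apply Hn. exists i. congruence.
Qed.

Lemma VD_to_VDset : forall a (A : LO), VD a A ->
  forall T (lt : T -> T -> Prop) (e : car A -> T), embedding A lt e -> VDset lt a (img e).
Proof.
  apply (VD_ind_nested (fun a A => forall T (lt : T -> T -> Prop) (e : car A -> T),
                                  embedding A lt e -> VDset lt a (img e))).
  - intros a A H T lt e He. apply VDset_empty. intros t [x _]. auto.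
  - intros a A [x0 H] T lt e He. apply (VDset_single _ _ _ (e x0)); [exists x0; auto|].
    intros t [x Hx]. subst. rewrite (H x). reflexivity.
  - intros a A n F IH Hs.
    apply (VDset_of_embedded_sum a A _ fin_lt F (fun i => Z.of_nat (proj1_sig i))); auto.
    + intros i j; unfold fin_lt; lia.
    + intros i j E. apply sig_ext. lia.
  - intros a A F IH Hs. apply (VDset_of_embedded_sum a A _ Peano.lt F Z.of_nat); auto; intros i j; lia.
  - intros a A F IH Hs.
    apply (VDset_of_embedded_sum a A _ (fun i j => (j < i)%nat) F (fun i => (- Z.of_nat i)%Z)); auto;
      intros i j; lia.
  - intros a A F IH Hs. apply (VDset_of_embedded_sum a A _ Z.lt F (fun i => i)); auto.
Qed.

Lemma FinSumOf_to_FinVDset : forall a (A : LO), FinSumOf (VD a) A ->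
  forall T (lt : T -> T -> Prop) (e : car A -> T), embedding A lt e -> FinVDset lt a (img e).
Proof.
  intros a A [n [F [HF Hs]]] T lt e He.
  destruct (embedded_sum_blocks A _ fin_lt F (fun i => Z.of_nat (proj1_sig i)) T lt e)
    as [blk [Hm [Hr Hbl]]]; auto.
  { intros i j; unfold fin_lt; lia. }
  { intros i j E. apply sig_ext. lia. }
  exists n, (fun t => Z.to_nat (blk t)). split; [|split].
  - intros t Ht. destruct (Hr t Ht) as [[i p] Hi]. simpl in Hi. lia.
  - intros t t' Ht Ht' Hlt. specialize (Hm t t' Ht Ht' Hlt). lia.
  - intros k. destruct (lt_dec k n) as [Hk|Hk].
    + destruct (Hbl (exist _ k Hk)) as [ei [Hei Himg]]. eapply VDset_ext.
      * apply (VD_to_VDset a (F (exist _ k Hk)) (HF _) T lt ei Hei).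
      * intros t. rewrite <- Himg. simpl. split; intros [Ht Hb]; split; auto.
        -- lia.
        -- destruct (Hr t Ht) as [[i p] Hi]. simpl in Hi. lia.
    + apply VDset_empty. intros t [Ht Hb]. destruct (Hr t Ht) as [[i p] Hi]. simpl in Hi. lia.
Qed.

Section Parts.
Variables (A : LO) (P : car A -> Prop) (B : LO).

Hypothesis Hiso : Iso {x : car A | P x} (fun x y => rel A (proj1_sig x) (proj1_sig y)) (car B) (rel B).

Lemma iso_part_embedding : exists e : car B -> car A, embedding B (rel A) e /\ forall t, img e t <-> P t.
Proof.
  destruct Hiso as [f [[fi fs] fo]]. apply choice in fs. destruct fs as [g Hg].
  exists (fun y => proj1_sig (g y)). split.
  - intros y y'. rewrite <- (Hg y) at 1. rewrite <- (Hg y') at 1. rewrite <- fo. tauto.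
  - intros t; split.
    + intros [y Hy]. subst. apply (proj2_sig (g y)).
    + intros Ht. exists (f (exist _ t Ht)).
      rewrite (fi (g (f (exist _ t Ht))) (exist _ t Ht) (Hg _)). reflexivity.
Qed.

Lemma iso_part_FinSumOf : forall b, FinSumOf (VD b) B <-> FinVDset (rel A) b P.
Proof.
  intros b. destruct iso_part_embedding as [e [He Hi]]. split.
  - intros H. eapply FinVDset_ext; [apply (FinSumOf_to_FinVDset b B H _ (rel A) e He)|exact Hi].
  - intros H. eapply FinSumOf_iso; [apply (FinVDset_to_FinSumOf A b P H)|exact Hiso].
Qed.

Lemma iso_part_scattered : scattered A -> scattered B.
Proof.
  intros Hsc [h Hh]. apply Hsc. destruct iso_part_embedding as [e [He _]].
  exists (fun q => e (h q)). intros p q Hpq. apply He, Hh, Hpq.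
Qed.

End Parts.

Lemma whole_FinSumOf : forall (A : LO) b, FinSumOf (VD b) A <-> FinVDset (rel A) b (fun _ => True).
Proof. intros A b. apply iso_part_FinSumOf, subLO_full_iso. Qed.

(** Suppose no part [B_i] has VD_*-rank [a].  Each [B_i], being a scattered
    suborder of a finite sum of VD_a orderings, is then a finite sum of VD_b
    orderings for some [b < a]; a common bound [c < a] exists as [n >= 1],
    and the finite partition lemma makes [A] a finite sum of VD_c orderings,
    contradicting the minimality of [a]. *)
Theorem corollary4p9 (a : ord) (A : LO) (n : nat) (B : fin_idx n -> LO) :
  (1 <= n)%nat ->
  scattered A ->
  VDstar_is A a ->
  sum_augmentation A n B ->
  exists i : fin_idx n, scattered (B i) /\ VDstar_is (B i) a.
Proof.
  intros Hn Hsc [HA Hmin] [part Hiso].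
  pose proof (proj1 (whole_FinSumOf A a) HA) as HAset.
  apply NNPP; intros Hno.
  assert (Hlow : forall i, exists b, olt b a /\ FinVDset (rel A) b (fun x => part x = i)).
  { intros i. apply NNPP; intros Hi. apply Hno. exists i. split; [|split].
    - exact (iso_part_scattered A _ (B i) (Hiso i) Hsc).
    - apply (iso_part_FinSumOf A _ (B i) (Hiso i)), (FinVDset_sub (rel A) a _ HAset). auto.
    - intros b Hb HB. apply Hi. exists b. split; auto. apply (iso_part_FinSumOf A _ (B i) (Hiso i)), HB. }
  apply choice in Hlow. destruct Hlow as [h Hh].
  destruct (olt_bound_fin a n h Hn (fun i => proj1 (Hh i))) as [c [Hc Hhc]].
  apply (Hmin c Hc), whole_FinSumOf.
  apply (FinVDset_of_partition (rel A) (rel_irrefl A) (rel_trans A) (rel_total A) (car_countable A) c n part).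
  intros i. exact (FinVDset_level _ _ _ (proj2 (Hh i)) c (Hhc i)).
Qed.
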